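(* Let $X$ be a completely regular Hausdorff space and let $A(X)$ be an adequate subspace of $C(X)$. Then $\hat{A}_b(X)=\{\hat f: f\in A_b(X)\}$ is a subspace of $C(\mathcal{A}X)$ that precisely separates points from closed sets in $\mathcal{A}X$.
   Context: All functions are real-valued; $C(X)$ is the continuous real functions on $X$, $1_X$ the constant $1$. A subspace $A(Z)\subseteq C(Z)$ separates points from closed sets if for every $z\in Z$ and closed $F\subseteq Z$ with $z\notin F$ there is $f\in A(Z)$ with $f(z)=1$ and $f=0$ on $F$; it does so precisely if such $f$ can always be chosen with values in $[0,1]$. $A(X)$ is adequate if (a) it separates points from closed sets and contains the constant functions; (b) there is a continuous nondecreasing $g:\mathbb{R}\to\mathbb{R}$ with $g(t)=0$ for $t\le0$, $g(t)=1$ for $t\ge1$, and $g\circ f\in A(X)$ for all $f\in A(X)$; (c) every $f\in A(X)$ is $f_1-f_2$ with $f_1,f_2\in A(X)$ nonnegative. The $A(X)$-compactification $\mathcal{A}X$ is the closure of the image of the embedding $i:X\to[-\infty,\infty]^{A(X)}$, $i(x)(\varphi)=\varphi(x)$, in the product of copies of $[-\infty,\infty]$ (order topology); $X$ is identified with $i(X)$. For $f\in A(X)$, $\hat f:\mathcal{A}X\to[-\infty,\infty]$, $\hat f(x)=x(f)$, is the continuous extension of $f$. $A_b(X)$ denotes the bounded functions in $A(X)$; for $f\in A_b(X)$, $\hat f$ is real-valued and continuous on $\mathcal{A}X$. *)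

From HB Require Import structures.
From mathcomp Require Import all_boot all_order all_algebra.
From mathcomp Require Import all_classical all_reals all_analysis.
Set Implicit Arguments. Unset Strict Implicit. Unset Printing Implicit Defensive.
Import Order.TTheory GRing.Theory Num.Theory.
Import numFieldNormedType.Exports.
Local Open Scope classical_set_scope.
Local Open Scope ring_scope.

Section Adequate.
Variables (R : realType) (X : topologicalType).

Definition is_subspace_C (A : set (X -> R)) : Prop :=
  [/\ (forall f, A f -> continuous f),
      A (fun _ => 0) &
      (forall (a : R) f g, A f -> A g -> A (fun x => a * f x + g x))].

Definition separates_points_closed (A : set (X -> R)) : Prop :=
  forall (z : X) (F : set X), closed F -> ~ F z ->
    exists f, A f /\ f z = 1 /\ (forall y, F y -> f y = 0).

Definition contains_constants (A : set (X -> R)) : Prop :=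
  forall c : R, A (fun _ => c).

Definition adequate (A : set (X -> R)) : Prop :=
  [/\ separates_points_closed A /\ contains_constants A,
      (exists g : R -> R,
          [/\ continuous g, {homo g : s t / s <= t},
              (forall t, t <= 0 -> g t = 0),
              (forall t, 1 <= t -> g t = 1) &
              (forall f, A f -> A (g \o f))]) &
      (forall f, A f -> exists f1 f2, [/\ A f1, A f2,
          (forall x, 0 <= f1 x), (forall x, 0 <= f2 x) &
          (forall x, f x = f1 x - f2 x)])].

Definition Aidx (A : set (X -> R)) : Type := sig (fun f : X -> R => A f).

Definition Aprod (A : set (X -> R)) : topologicalType :=
  prod_topology (fun _ : Aidx A => \bar R).

Definition Aemb (A : set (X -> R)) (x : X) : Aprod A :=
  fun phi : Aidx A => ((proj1_sig phi) x)%:E.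

Definition Acompact (A : set (X -> R)) : set (Aprod A) := closure (range (@Aemb A)).

Definition ahat (A : set (X -> R)) (phi : Aidx A) (x : Aprod A) : \bar R := x phi.

(* \hat A_b(X) as real-valued functions on the product (only their
   restriction to the compactification matters) *)
Definition Ahat_b (A : set (X -> R)) : set (Aprod A -> R) :=
  [set h | exists phi : Aidx A, bounded_fun (proj1_sig phi) /\
                                h = fun x => fine (ahat phi x)].
End Adequate.

Arguments is_subspace_C {R X} A.
Arguments separates_points_closed {R X} A.
Arguments contains_constants {R X} A.
Arguments adequate {R X} A.
Arguments Aidx {R X} A.
Arguments Aprod {R X} A.
Arguments Aemb {R X} A x.
Arguments Acompact {R X} A.
Arguments ahat {R X A} phi x.
Arguments Ahat_b {R X} A.

From HB Require Import structures.
From mathcomp Require Import all_boot all_order all_algebra.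
From mathcomp Require Import all_classical all_reals all_analysis.
From mathcomp Require Import lra.
Import Order.TTheory GRing.Theory Num.Theory.
Import numFieldNormedType.Exports.
Local Open Scope classical_set_scope.
Local Open Scope ring_scope.

(* Each coordinate map y |-> y(f) of the product is continuous, and X is dense in
   AX, so any closed condition satisfied by the values of f on X (a bound, an
   algebraic identity between elements of A(X)) holds for the hats on AX; for
   bounded f this makes \hat f real-valued and continuous.  For the separation,
   call V a peak set at z when some \hat f with values in [0,1] equals 1 at z and
   vanishes off V.  Peak sets form a filter: g (\hat f + \hat f' - 1) witnesses
   the intersection of the sets witnessed by \hat f and \hat f'.  The ramps
   g ((f - a) / (b - a)) and g ((b - f) / (b - a)) show that the coordinate rays
   through z are peak sets, so the filter contains every neighbourhood of z in
   the product topology. *)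

Section closure.
Context {T : topologicalType}.

Lemma closure_closed_image {U : topologicalType} (S O : set T) (C : set U)
    (g : T -> U) :
  open O -> closed C ->
  (forall x, closure S x -> O x -> {for x, continuous g}) ->
  (forall s, S s -> O s -> C (g s)) ->
  forall x, closure S x -> O x -> C (g x).
Proof.
move=> oO cC gcont gSC x Sx Ox; apply: contrapT => nCgx.
have /Sx[s [Ss [Os nCgs]]] : nbhs x (O `&` g @^-1` (~` C)).
  apply: filterI; first exact: open_nbhs_nbhs.
  by apply: gcont => //; apply: open_nbhs_nbhs; split => //; rewrite openC.
exact: nCgs (gSC s Ss Os).
Qed.

Lemma closure_eq {R : realType} (S : set T) (g h : T -> R) :
  (forall x, closure S x -> {for x, continuous g}) ->
  (forall x, closure S x -> {for x, continuous h}) ->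
  {in S, g =1 h} -> {in closure S, g =1 h}.
Proof.
move=> gcont hcont gh x /set_mem Sx; apply/eqP; rewrite -subr_eq0; apply/eqP.
apply: (@closure_closed_image _ S setT [set 0] (g \- h) openT (closed_eq (y:=0))
  _ _ x Sx I).
- by move=> y Sy _; apply: cvgB; [apply: gcont | apply: hcont].
- by move=> s Ss _; rewrite /= gh ?subrr //; apply/mem_set.
Qed.

End closure.

Lemma bounded_funP {T : Type} {R : realType} (f : T -> R) :
  bounded_fun f <-> exists M, forall x, `|f x| <= M.
Proof.
split => [[M [_ fM]]|[M fM]].
  by exists (M + 1) => x; apply: (fM (M + 1)) => //; rewrite ltrDl.
exists M; split; first exact: num_real.
by move=> N MN x _; apply: le_trans (fM x) _; apply: ltW.
Qed.

Section compactification.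
Context {R : realType} {X : topologicalType} {A : set (X -> R)}.
Local Notation AX := (Acompact A).

Definition fhat (phi : Aidx A) (x : Aprod A) : R := fine (ahat phi x).

Lemma ahat_continuous (phi : Aidx A) : continuous (ahat phi).
Proof.
move=> x W; rewrite nbhsE => -[N [oN Nx] NW]; rewrite nbhs_simpl.
apply: (filterS (fun y => @NW (y phi))).
have /cvg_sup/(_ phi) : x --> x by apply: cvg_id.
by apply; apply: open_nbhs_nbhs; split => //; exists N.
Qed.

Local Open Scope ereal_scope.

Lemma ahat_bounded {phi : Aidx A} {M : R} :
  (forall p, `|sval phi p| <= M)%R ->
  forall x, AX x -> (- M)%:E <= ahat phi x <= M%:E.
Proof.
move=> phiM x AXx; apply/andP.
apply: (@closure_closed_image _ _ _ setT
  ([set t | (- M)%:E <= t] `&` [set t | t <= M%:E]) (ahat phi) openT _ _ _ x AXx I).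
- by apply: closedI; [exact: closed_ereal_le_ereal | exact: closed_ereal_ge_ereal].
- by move=> y _ _; apply: ahat_continuous.
- move=> _ [p _ <-] _; have := phiM p; rewrite ler_norml => /andP[lo hi].
  by rewrite /= !lee_fin.
Qed.

Lemma ahat_fin_num {phi : Aidx A} : bounded_fun (sval phi) ->
  forall {x}, AX x -> ahat phi x \is a fin_num.
Proof.
move=> /bounded_funP[M phiM] x AXx; have /andP[lox hix] := ahat_bounded phiM x AXx.
by rewrite fin_numElt (lt_le_trans _ lox) ?ltNyr // (le_lt_trans hix) ?ltry.
Qed.

Local Close Scope ereal_scope.

Lemma fhat_continuous {phi : Aidx A} : bounded_fun (sval phi) ->
  forall {x}, AX x -> {for x, continuous (fhat phi)}.
Proof.
move=> bphi x AXx; have /fineK phix := ahat_fin_num bphi AXx.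
have /fine_cvg// : ahat phi @ x --> (fhat phi x)%:E.
  by rewrite /fhat phix; exact: ahat_continuous.
Qed.

Lemma Ahat_b_fhat (phi : Aidx A) : bounded_fun (sval phi) -> Ahat_b A (fhat phi).
Proof. by exists phi. Qed.

Lemma fhat_closed_image (phi psi : Aidx A) (O : set (\bar R)) (C : set R) :
  bounded_fun (sval psi) -> open O -> closed C ->
  (forall p, O (sval phi p)%:E -> C (sval psi p)) ->
  forall y, AX y -> O (ahat phi y) -> C (fhat psi y).
Proof.
move=> bpsi oO cC phipsi.
apply: (@closure_closed_image _ _ _ (ahat phi @^-1` O)) => //.
- exact: (continuousP _).1 (ahat_continuous phi) _ oO.
- by move=> y AXy _; apply: fhat_continuous.
- by move=> _ [p _ <-]; apply: phipsi.
Qed.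

Lemma Acompact_eq (g h : Aprod A -> R) :
  (forall x, AX x -> {for x, continuous g}) ->
  (forall x, AX x -> {for x, continuous h}) ->
  (forall p, g (Aemb A p) = h (Aemb A p)) -> {in AX, g =1 h}.
Proof. by move=> gc hc gh; apply: closure_eq => // _ /set_mem[p _ <-]. Qed.

End compactification.

Section ereal_density.
Context {R : realType}.
Local Open Scope ereal_scope.

Lemma EFin_lt_dense {c : R} {t : \bar R} :
  c%:E < t -> exists2 b : R, (c < b)%R & b%:E < t.
Proof.
case: t => [r| |] // cr; last by exists (c + 1)%R; rewrite ?ltry //; lra.
by move: cr; rewrite lte_fin => cr; exists ((c + r) / 2)%R; rewrite ?lte_fin; lra.
Qed.

Lemma EFin_gt_dense {c : R} {t : \bar R} :
  t < c%:E -> exists2 b : R, (b < c)%R & t < b%:E.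
Proof.
case: t => [r| |] // rc; last by exists (c - 1)%R; rewrite ?ltNyr //; lra.
by move: rc; rewrite lte_fin => rc; exists ((c + r) / 2)%R; rewrite ?lte_fin; lra.
Qed.

End ereal_density.

Section adequate_operations.
Context {R : realType} {X : topologicalType} {A : set (X -> R)} {g : R -> R}.
Local Notation AX := (Acompact A).
Hypothesis A_comb : forall (a : R) f h, A f -> A h -> A (fun x => a * f x + h x).
Hypothesis A_cst : forall c : R, A (fun=> c).
Hypothesis A_g : forall f, A f -> A (g \o f).
Hypothesis g_cont : continuous g.
Hypothesis g_homo : {homo g : s t / s <= t}.
Hypothesis g_le0 : forall t, t <= 0 -> g t = 0.
Hypothesis g_ge1 : forall t, 1 <= t -> g t = 1.

Definition Acst (c : R) : Aidx A := exist _ _ (A_cst c).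

Definition Acomb (a : R) (phi psi : Aidx A) : Aidx A :=
  exist _ _ (A_comb a _ _ (svalP phi) (svalP psi)).

Definition Aramp (phi : Aidx A) (a b : R) : Aidx A :=
  exist _ _ (A_g _ (A_comb a _ _ (svalP phi) (A_cst b))).

Lemma g_itv01 t : 0 <= g t <= 1.
Proof.
apply/andP; split.
  have [t0|t0] := leP t 0; first by rewrite g_le0.
  by rewrite -(g_le0 _ (lexx 0)) g_homo // ltW.
have [t1|t1] := leP 1 t; first by rewrite g_ge1.
by rewrite -(g_ge1 _ (lexx 1)) g_homo // ltW.
Qed.

Lemma bounded_Acst c : bounded_fun (sval (Acst c)).
Proof. by apply/bounded_funP; exists `|c|. Qed.

Lemma bounded_Acomb a {phi psi : Aidx A} :
  bounded_fun (sval phi) -> bounded_fun (sval psi) ->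
  bounded_fun (sval (Acomb a phi psi)).
Proof.
move=> /bounded_funP[M phiM] /bounded_funP[N psiN]; apply/bounded_funP.
exists (`|a| * M + N) => x /=; rewrite (le_trans (ler_normD _ _)) // normrM.
by rewrite lerD // ler_wpM2l.
Qed.

Lemma bounded_Aramp phi a b : bounded_fun (sval (Aramp phi a b)).
Proof.
apply/bounded_funP; exists 1 => x /=.
by have /andP[g0 g1] := g_itv01 (a * sval phi x + b); rewrite ger0_norm.
Qed.

Lemma fhat_Acst c x : AX x -> fhat (Acst c) x = c.
Proof.
move=> AXx.
apply: (@Acompact_eq R X A _ (fun=> c) _ _ _ x (mem_set AXx)) => [y AXy|y _|//].
- by apply: fhat_continuous AXy; apply: bounded_Acst.
- exact: cst_continuous.
Qed.

Lemma fhat_Acomb a phi psi x :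
  bounded_fun (sval phi) -> bounded_fun (sval psi) -> AX x ->
  fhat (Acomb a phi psi) x = a * fhat phi x + fhat psi x.
Proof.
move=> bphi bpsi AXx.
apply: (@Acompact_eq R X A _ (fun y => a * fhat phi y + fhat psi y) _ _ _ x
  (mem_set AXx)) => [y AXy|y AXy|//].
- by apply: fhat_continuous AXy; apply: bounded_Acomb.
- have := fhat_continuous bphi AXy; have := fhat_continuous bpsi AXy.
  by move=> cpsi cphi; apply: (cvgD (cvgMl_tmp (a:=a) cphi) cpsi).
Qed.

Lemma fhat_Aramp phi a b x : bounded_fun (sval phi) -> AX x ->
  fhat (Aramp phi a b) x = g (a * fhat phi x + b).
Proof.
move=> bphi AXx.
apply: (@Acompact_eq R X A _ (fun y => g (a * fhat phi y + b)) _ _ _ x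
  (mem_set AXx)) => [y AXy|y AXy|//].
- by apply: fhat_continuous AXy; apply: bounded_Aramp.
- have cphi := fhat_continuous bphi AXy.
  apply: (@continuous_comp _ _ _ (fun y => a * fhat phi y + b) g); last exact: g_cont.
  exact: cvgD (cvgMl_tmp (a:=a) cphi) (@cst_continuous _ _ b y).
Qed.

Lemma Aramp_closed_image phi a b (O : set (\bar R)) (C : set R) :
  open O -> closed C -> (forall t : R, O t%:E -> C (g (a * t + b))) ->
  forall y, AX y -> O (ahat phi y) -> C (fhat (Aramp phi a b) y).
Proof.
move=> oO cC gC; apply: fhat_closed_image => // [|p]; first exact: bounded_Aramp.
exact: gC.
Qed.

Lemma fhat_Aramp_itv01 phi a b y : AX y -> 0 <= fhat (Aramp phi a b) y <= 1.
Proof.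
move=> AXy; apply/andP.
apply: (@Aramp_closed_image phi a b setT ([set t | 0 <= t] `&` [set t | t <= 1])
  openT _ _ y AXy I) => [|t _].
- by apply: closedI; [exact: closed_ge | exact: closed_le].
- exact/andP/g_itv01.
Qed.

Local Open Scope ereal_scope.

Lemma ramp_up phi {a b : R} : (a < b)%R -> exists psi : Aidx A,
  [/\ bounded_fun (sval psi), (forall y, AX y -> (0 <= fhat psi y <= 1)%R),
      (forall y, AX y -> ahat phi y < a%:E -> fhat psi y = 0%R) &
      (forall y, AX y -> b%:E < ahat phi y -> fhat psi y = 1%R)].
Proof.
move=> ab; have ba_gt0 : (0 < b - a)%R by rewrite subr_gt0.
have ramp t : ((b - a)^-1 * t + - a / (b - a) = (t - a) / (b - a))%R.
  by rewrite mulrC -mulrDl.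
exists (Aramp phi (b - a)^-1 (- a / (b - a))); split.
- exact: bounded_Aramp.
- by move=> y AXy; apply: fhat_Aramp_itv01 AXy.
- apply: (@Aramp_closed_image phi _ _ [set u | u < a%:E] [set 0%R]);
    [exact: open_ereal_lt_ereal | exact: closed_eq |].
  move=> t; rewrite /= lte_fin ramp => ta; apply: g_le0.
  by rewrite ler_pdivrMr // mul0r; lra.
- apply: (@Aramp_closed_image phi _ _ [set u | b%:E < u] [set 1%R]);
    [exact: open_ereal_gt_ereal | exact: closed_eq |].
  move=> t; rewrite /= lte_fin ramp => bt; apply: g_ge1.
  by rewrite ler_pdivlMr // mul1r; lra.
Qed.

Lemma ramp_down phi {a b : R} : (a < b)%R -> exists psi : Aidx A,
  [/\ bounded_fun (sval psi), (forall y, AX y -> (0 <= fhat psi y <= 1)%R),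
      (forall y, AX y -> ahat phi y < a%:E -> fhat psi y = 1%R) &
      (forall y, AX y -> b%:E < ahat phi y -> fhat psi y = 0%R)].
Proof.
move=> ab; have ba_gt0 : (0 < b - a)%R by rewrite subr_gt0.
have ramp t : (- (b - a)^-1 * t + b / (b - a) = (b - t) / (b - a))%R.
  by rewrite mulNr mulrC addrC -mulrBl.
exists (Aramp phi (- (b - a)^-1) (b / (b - a))); split.
- exact: bounded_Aramp.
- by move=> y AXy; apply: fhat_Aramp_itv01 AXy.
- apply: (@Aramp_closed_image phi _ _ [set u | u < a%:E] [set 1%R]);
    [exact: open_ereal_lt_ereal | exact: closed_eq |].
  move=> t; rewrite /= lte_fin ramp => ta; apply: g_ge1.
  by rewrite ler_pdivlMr // mul1r; lra.
- apply: (@Aramp_closed_image phi _ _ [set u | b%:E < u] [set 0%R]);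
    [exact: open_ereal_gt_ereal | exact: closed_eq |].
  move=> t; rewrite /= lte_fin ramp => bt; apply: g_le0.
  by rewrite ler_pdivrMr // mul0r; lra.
Qed.

Section peaks.
Variable z : Aprod A.
Hypothesis AXz : AX z.

Definition peak_within : set_system (Aprod A) := fun V => exists psi : Aidx A,
  [/\ bounded_fun (sval psi), fhat psi z = 1%R,
      (forall y, AX y -> (0 <= fhat psi y <= 1)%R) &
      (forall y, AX y -> ~ V y -> fhat psi y = 0%R)].

Lemma peak_within_filter : Filter peak_within.
Proof.
constructor.
- exists (Acst 1); split; [exact: bounded_Acst | exact: fhat_Acst | | by move=> ? _ []].
  by move=> y AXy; rewrite fhat_Acst // ler01 lexx.
- move=> V W [s [bs sz s01 sV]] [t [bt tz t01 tW]].
  have bst := bounded_Acomb 1 bs bt.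
  have fhatE y : AX y ->
      fhat (Aramp (Acomb 1 s t) 1 (-1)) y = g (fhat s y + fhat t y - 1).
    by move=> AXy; rewrite fhat_Aramp // fhat_Acomb // !mul1r.
  exists (Aramp (Acomb 1 s t) 1 (-1)); split.
  + exact: bounded_Aramp.
  + by rewrite fhatE // sz tz g_ge1 //; lra.
  + by move=> y AXy; apply: fhat_Aramp_itv01.
  + move=> y AXy VWy; rewrite fhatE //; apply: g_le0.
    have /andP[s0 s1] := s01 y AXy; have /andP[t0 t1] := t01 y AXy.
    have [Vy|nVy] := pselect (V y); last by rewrite sV //; lra.
    have [Wy|nWy] := pselect (W y); last by rewrite tW //; lra.
    by case: VWy.
- move=> V W VW [s [bs sz s01 sV]]; exists s; split => // y AXy nWy.
  by apply: sV => // /VW.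
Qed.

Lemma peak_within_gt phi (c : R) :
  c%:E < ahat phi z -> peak_within [set y | c%:E < ahat phi y].
Proof.
move=> cz; have [b cb bz] := EFin_lt_dense cz; have [b' bb' b'z] := EFin_lt_dense bz.
have [psi [bpsi psi01 psi0 psi1]] := ramp_up phi bb'.
exists psi; split => // [|y AXy /negP]; first exact: psi1.
by rewrite -leNgt => yc; apply: psi0 => //; rewrite (le_lt_trans yc) ?lte_fin.
Qed.

Lemma peak_within_lt phi (c : R) :
  ahat phi z < c%:E -> peak_within [set y | ahat phi y < c%:E].
Proof.
move=> zc; have [b bc zb] := EFin_gt_dense zc; have [b' b'b zb'] := EFin_gt_dense zb.
have [psi [bpsi psi01 psi1 psi0]] := ramp_down phi b'b.
exists psi; split => // [|y AXy /negP]; first exact: psi1.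
by rewrite -leNgt => cy; apply: psi0 => //; rewrite (lt_le_trans _ cy) ?lte_fin.
Qed.

Lemma peak_within_ahat phi (N : set (\bar R)) :
  nbhs (ahat phi z) N -> peak_within (ahat phi @^-1` N).
Proof.
have Fpeak := peak_within_filter.
case Ez: (ahat phi z) => [r| |] /=.
- move=> rN; have /nbhs_ballP[e e0 reN] : nbhs r (fun t => N t%:E) := rN.
  apply: filterS (filterI (peak_within_gt phi (r - e)%R _)
                          (peak_within_lt phi (r + e)%R _)); last first.
  + by rewrite Ez lte_fin ltrDl.
  + by rewrite Ez lte_fin ltrBlDr ltrDl.
  move=> y [/=]; case: (ahat phi y) => [t| |] //; rewrite !lte_fin => rt tr.
  by apply: reN; rewrite /ball /= ltr_distlC; apply/andP; split; lra.
- move=> [M [_ MN]]; apply: filterS (peak_within_gt phi (M + 1)%R _) => [y /= My|].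
    by apply: MN; rewrite (lt_trans _ My) // lte_fin ltrDl.
  by rewrite Ez ltry.
- move=> [M [_ MN]]; apply: filterS (peak_within_lt phi (M - 1)%R _) => [y /= yM|].
    by apply: MN; rewrite (lt_trans yM) // lte_fin ltrBlDr ltrDl.
  by rewrite Ez ltNyr.
Qed.

Lemma peak_within_nbhs : nbhs z `<=` peak_within.
Proof.
have Fpeak := peak_within_filter.
have : peak_within --> z.
  apply/cvg_sup => phi U /= [_ [[N oN <-] Nz NU]].
  by apply: filterS NU _; apply: peak_within_ahat; apply: open_nbhs_nbhs.
by [].
Qed.

End peaks.
End adequate_operations.

Theorem lemma3p3 (R : realType) (X : topologicalType)
    (hX : hausdorff_space X) (crX : completely_regular_space X)
    (A : set (X -> R)) (hA : is_subspace_C A) (adA : adequate A) :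
  let AX := Acompact A in
  (* each \hat f, f in A_b(X), is real-valued and continuous on AX *)
  (forall phi : Aidx A, bounded_fun (proj1_sig phi) ->
     (forall x, AX x -> ahat phi x \is a fin_num) /\
     {within AX, continuous (fun x => fine (ahat phi x))}) /\
  (* \hat A_b(X) is a linear subspace of C(AX) *)
  (exists h0, Ahat_b A h0 /\ forall x, AX x -> h0 x = 0) /\
  (forall (a : R) h1 h2, Ahat_b A h1 -> Ahat_b A h2 ->
     exists h3, Ahat_b A h3 /\ forall x, AX x -> h3 x = a * h1 x + h2 x) /\
  (* \hat A_b(X) precisely separates points from closed sets of AX *)
  (forall (z : Aprod A) (F : set (subspace AX)),
     AX z -> closed F -> F `<=` AX -> ~ F z ->
     exists h, Ahat_b A h /\ h z = 1 /\ (forall y, F y -> h y = 0) /\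
               (forall y, AX y -> 0 <= h y <= 1)).
Proof.
move=> AX.
case: adA => [[_ A_cst] [g [g_cont g_homo g_le0 g_ge1 A_g]] _].
case: hA => _ _ A_comb.
split.
  move=> phi bphi; split => [x AXx|]; first exact: ahat_fin_num.
  by apply: continuous_in_subspaceT => x /set_mem AXx; apply: fhat_continuous.
split.
  exists (fhat (Acst A_cst 0)); split; last exact: fhat_Acst.
  exact/Ahat_b_fhat/bounded_Acst.
split.
  move=> a _ _ [phi1 [b1 ->]] [phi2 [b2 ->]].
  exists (fhat (Acomb A_comb a phi1 phi2)); split=> [|x AXx]; last exact: fhat_Acomb b1 b2 AXx.
  exact/Ahat_b_fhat/bounded_Acomb.
move=> z F AXz cF FAX nFz.
have /open_subspaceP[V oV VF] : open (~` F : set (subspace AX)) by rewrite openC.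
have Vz : V z by have [] : (V `&` AX) z by rewrite VF.
have [psi [bpsi psiz psi01 psiV]] := peak_within_nbhs A_comb A_cst A_g g_cont
  g_homo g_le0 g_ge1 z AXz V (open_nbhs_nbhs (conj oV Vz)).
exists (fhat psi); split; first exact: Ahat_b_fhat.
split=> //; split=> [y Fy|]; last exact: psi01.
apply: psiV (FAX y Fy) _ => Vy.
have : (V `&` AX) y by split; last exact: FAX.
by rewrite VF => -[].
Qed.
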